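(* With $B_n,P_n$ as in the context, let $L_n=|B_n|$, $m_n=|P_n|$, and $c_n$ the number of occurrences of the symbol $1$ in $B_n$. Then for all $n\ge1$, $m_n=L_n-2c_n$; equivalently, $m_n$ equals the number of occurrences of $3$ in $B_n$ minus the number of occurrences of $1$ in $B_n$.
   Context: Generation operator: for a finite vector $R=\langle r_1,\dots,r_m\rangle$ of positive integers and $s\in\{1,3\}$, $\mathcal{G}(R,s)= s^{r_1}\,(4-s)^{r_2}\,s^{r_3}\cdots$ (the $i$-th run consists of $r_i$ copies of $s$ if $i$ is odd and of $4-s$ if $i$ is even), of length $\sum_i r_i$. For a finite word $W$ over $\{1,3\}$, $R(W)$ denotes $W$ itself regarded as a vector of positive integers. Define $B_1=\mathcal{G}(\langle 1,3,3,3,1\rangle,1)=1\,3\,3\,3\,1\,1\,1\,3\,3\,3\,1$, $P_1=3$, and for $n\ge1$: $B_{n+1}=B_n\,P_n\,B_n$ (concatenation), $P_{n+1}=\mathcal{G}(R(P_n),3)$. *)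

From mathcomp Require Import all_boot.
Set Implicit Arguments. Unset Strict Implicit. Unset Printing Implicit Defensive.

(* Words over {1,3} are represented as seq nat. *)
(* Generation operator G(R, s): the i-th run (1-indexed) consists of r_i copies
   of s if i is odd and of 4 - s if i is even. *)
Fixpoint gen (R : seq nat) (s : nat) : seq nat :=
  match R with
  | [::] => [::]
  | r :: R' => nseq r s ++ gen R' (4 - s)
  end.

(* B_1 = G(<1,3,3,3,1>, 1), P_1 = 3, B_{n+1} = B_n P_n B_n, P_{n+1} = G(R(P_n), 3).
   BP n = (B_{n+1}, P_{n+1}) (0-based indexing internally). *)
Fixpoint BP (n : nat) : seq nat * seq nat :=
  match n with
  | 0 => (gen [:: 1; 3; 3; 3; 1] 1, [:: 3])
  | n'.+1 => let (b, p) := BP n' in (b ++ p ++ b, gen p 3)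
  end.

(* 1-indexed: B n = B_n, P n = P_n for n >= 1. *)
Definition B (n : nat) : seq nat := (BP n.-1).1.
Definition P (n : nat) : seq nat := (BP n.-1).2.

(* Write d(w) for the number of 3s minus the number of 1s in a word w over
   {1,3}. Since B_{n+1} = B_n P_n B_n, d(B_{n+1}) = 2 d(B_n) + d(P_n); and
   since P_{n+1} = G(P_n, 3) has length sum(P_n), m_{n+1} = #1(P_n) + 3 #3(P_n),
   which equals 2 m_n + d(P_n) when m_n = |P_n| = #1(P_n) + #3(P_n). So the
   invariant d(B_n) = m_n propagates from d(B_1) = 1 = m_1. *)

From mathcomp Require Import all_boot.
From mathcomp Require Import zify.

Lemma size_gen (R : seq nat) (s : nat) : size (gen R s) = sumn R.
Proof. by elim: R s => [|r R IH] s //=; rewrite size_cat size_nseq IH. Qed.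

Lemma all_gen13 (R : seq nat) (s : nat) :
  pred2 1 3 s -> all (pred2 1 3) (gen R s).
Proof.
elim: R s => [|r R IH] s s13 //=; rewrite all_cat IH ?andbT.
- by apply/allP => x /nseqP [-> _].
- by case/orP: s13 => /eqP ->.
Qed.

Lemma size_count13 (w : seq nat) :
  all (pred2 1 3) w -> size w = count_mem 1 w + count_mem 3 w.
Proof.
elim: w => [|x w IH] //= /andP [/orP [] /eqP -> w13]; rewrite IH //=; lia.
Qed.

Lemma sumn_count13 (w : seq nat) :
  all (pred2 1 3) w -> sumn w = count_mem 1 w + 3 * count_mem 3 w.
Proof.
elim: w => [|x w IH] //= /andP [/orP [] /eqP -> w13]; rewrite IH //=; lia.
Qed.

Lemma BP_all13 (n : nat) :
  all (pred2 1 3) (BP n).1 && all (pred2 1 3) (BP n).2.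
Proof.
elim: n => [|n] //=; case: (BP n) => b p /= /andP [b13 p13].
by rewrite !all_cat b13 p13 all_gen13.
Qed.

Lemma count3_BP (n : nat) :
  count_mem 3 (BP n).1 = count_mem 1 (BP n).1 + size (BP n).2.
Proof.
elim: n => [|n IH] //=; move: IH (BP_all13 n).
case: (BP n) => b p /= IH /andP [_ p13].
rewrite !count_cat size_gen sumn_count13 // IH (size_count13 _ p13).
by move: (count_mem 1 b) (count_mem 1 p) (count_mem 3 p) => x y z; lia.
Qed.

Theorem proposition5p1 (n : nat) : 1 <= n ->
  size (P n) = size (B n) - 2 * count_mem 1 (B n) /\
  size (P n) + count_mem 1 (B n) = count_mem 3 (B n).
Proof.
move=> _; rewrite /P /B; have /andP [b13 _] := BP_all13 n.-1.
rewrite (size_count13 _ b13) count3_BP; split; lia.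
Qed.
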